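(* Let $G$ be an $(N,k)$ Adinkra with associated doubly even code $C$. For a closed walk in $G$, let $w\in\mathbb{Z}_2^N$ be the vector with $w_i=1$ exactly for those colors $i$ traversed an odd number of times. Then the nonzero codewords of $C$ correspond exactly to the closed walks of $G$ in which at least one edge color appears an odd number of times: for every such closed walk $w\in C\setminus\{0\}$, and every nonzero $c\in C$ arises as $w$ for some such closed walk.
   Context: An Adinkra of dimension $N$ is a finite connected simple graph $G=(V,E)$ with: a bipartition of $V$ into bosons and fermions (every edge joins a boson and a fermion); a height function $\mathrm{hgt}:V\to\mathbb{Z}$ with adjacent vertices at heights differing by $1$; a coloring of $E$ by colors $\{1,\dots,N\}$ such that each vertex is incident to exactly one edge of each color; an edge parity $\pi:E\to\mathbb{Z}_2$ (parity $1$ = dashed); such that every path with edge colors $(i,j)$, $i\ne j$, lies in a unique 4-cycle with colors $(i,j,i,j)$, each having an odd number of dashed edges. If $|V|=2^{N-k}$, $G$ is an $(N,k)$ Adinkra. A doubly even $(N,k)$ code is a $k$-dimensional subspace of $\mathbb{Z}_2^N$ all of whose elements have Hamming weight $\equiv0\pmod4$. Labeling the vertices of an $N$-cube Adinkra by $\mathbb{Z}_2^N$ so that color-$i$ edges join $v$ and $v+e_i$, the $(N,k)$ Adinkra $G$ is (up to switching, relabeling vertices and changing heights) obtained by identifying vertices whose labels differ by elements of a doubly even $(N,k)$ code $C$; this $C$ is the associated code of $G$. *)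

From HB Require Import structures.
From mathcomp Require Import all_boot all_order all_algebra .
Set Implicit Arguments. Unset Strict Implicit. Unset Printing Implicit Defensive.
Import Order.TTheory GRing.Theory Num.Theory.
Local Open Scope ring_scope.

(* Vectors of Z_2^N are row vectors 'rV['F_2]_N;
   a linear code is the row space of a square matrix C : 'M['F_2]_N. *)

Definition wt N (c : 'rV['F_2]_N) : nat := #|[set i : 'I_N | c ord0 i != 0%R]|.

Definition doubly_even N (C : 'M['F_2]_N) : Prop :=
  forall c : 'rV['F_2]_N, (c <= C)%MS -> (4 %| wt c)%N.

(* Edges are given by a symmetric irreflexive
   relation adj (simple graph); col u v / par u v are the colour / parity
   (true = dashed) of the edge {u,v} (only meaningful when adj u v). *)
Record Adinkra (N : nat) := {
  V : finType;
  adj : rel V;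
  adj_sym : forall u v, adj u v = adj v u;
  adj_irr : forall u, ~~ adj u u;
  connected : forall u v, connect adj u v;
  boson : pred V;
  bipartite : forall u v, adj u v -> boson u != boson v;
  hgt : V -> int;
  hgt_adj : forall u v, adj u v -> (hgt u - hgt v == 1)%R || (hgt v - hgt u == 1)%R;
  col : V -> V -> 'I_N;
  col_sym : forall u v, adj u v -> col u v = col v u;
  col_one : forall (v : V) (i : 'I_N), exists! u, adj v u /\ col v u = i;
  par : V -> V -> bool;
  par_sym : forall u v, adj u v -> par u v = par v u;
  square : forall u v w, adj u v -> adj v w -> col u v != col v w ->
    exists! x, [/\ adj w x, adj x u, col w x = col u v, col x u = col v w
               & odd (par u v + par v w + par w x + par x u)]
}.

Definition is_Nk_adinkra N k (G : Adinkra N) : Prop := #|V G| = (2 ^ (N - k))%N.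

Definition e_ N (i : 'I_N) : 'rV['F_2]_N := delta_mx 0 i.

(* C is the associated code of G: up to relabelling of vertices (switching
   and heights do not affect the underlying coloured graph), G is the
   quotient of the N-cube by C: there is a surjective labelling
   p : Z_2^N -> V whose fibres are exactly the cosets of C, such that
   colour-i edges join p v and p (v + e_i). *)
Definition associated_code N (G : Adinkra N) (C : 'M['F_2]_N) : Prop :=
  exists p : 'rV['F_2]_N -> V G,
    [/\ forall x : V G, exists v, p v = x,
        forall u v, p u = p v <-> ((u - v)%R <= C)%MS
      & forall v i, adj (p v) (p (v + e_ i)%R) /\ col (p v) (p (v + e_ i)%R) = i].

Definition closed_walk N (G : Adinkra N) (x : V G) (s : seq (V G)) : bool :=
  path (@adj N G) x s && (last x s == x).

Definition walk_vector N (G : Adinkra N) (x : V G) (s : seq (V G)) : 'rV['F_2]_N :=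
  \row_i (odd (count (pred1 i) (pairmap (@col N G) x s)))%:R.

From Pilot Require Import Defs.
From mathcomp Require Import all_boot all_order all_algebra .
Set Implicit Arguments. Unset Strict Implicit. Unset Printing Implicit Defensive.
Import GRing.Theory.
Local Open Scope ring_scope.

(* Lift G to the N-cube through the labelling p of its associated code.
   Because every vertex has exactly one edge of each colour, a walk in G is
   determined by its start and its colour sequence, hence is the image of the
   cube walk with the same colours.  A cube walk from v with colour sequence
   cs ends at v + sum_(j in cs) e_j, and this sum is exactly the walk vector;
   so a walk in G closes up iff its walk vector lies in C.  Conversely a
   codeword c is reached from 0 by stepping once along each i with c_i = 1. *)

Lemma natr_F2 (n : nat) : (n%:R : 'F_2) = (odd n)%:R.
Proof. by apply/val_inj; rewrite Zp_nat /= modn2; case: (odd n). Qed.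

Lemma sum_e_count N (cs : seq 'I_N) :
  \sum_(j <- cs) e_ j = \row_i (odd (count (pred1 i) cs))%:R.
Proof.
elim: cs => [|j cs IH]; first by rewrite big_nil; apply/rowP=> i; rewrite !mxE.
rewrite big_cons IH; apply/rowP=> i; rewrite !mxE /=.
by rewrite -natrD natr_F2 !oddD !oddb eq_sym.
Qed.

Lemma walk_vectorE N (G : Adinkra N) (x : V G) (s : seq (V G)) :
  walk_vector x s = \sum_(j <- pairmap (@Defs.col N G) x s) e_ j.
Proof. by rewrite sum_e_count. Qed.

Lemma sum_e_surj N (c : 'rV['F_2]_N) :
  exists cs : seq 'I_N, \sum_(j <- cs) e_ j = c.
Proof.
exists [seq i <- enum 'I_N | c ord0 i != 0]; rewrite sum_e_count; apply/rowP=> i.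
rewrite mxE (count_uniq_mem _ (filter_uniq _ (enum_uniq _))) mem_filter mem_enum.
by rewrite andbT oddb; case: (c 0 i) => [[|[|n]]] //= ?; apply/val_inj.
Qed.

Section CubeLabelling.

Variables (N : nat) (G : Adinkra N) (p : 'rV['F_2]_N -> V G).
Hypothesis p_edge :
  forall v i, adj (p v) (p (v + e_ i)) /\ Defs.col (p v) (p (v + e_ i)) = i.

Fixpoint cube_walk (v : 'rV['F_2]_N) (cs : seq 'I_N) : seq (V G) :=
  if cs is j :: cs' then p (v + e_ j) :: cube_walk (v + e_ j) cs' else [::].

Lemma path_cube_walk v cs : path (@adj N G) (p v) (cube_walk v cs).
Proof.
by elim: cs v => [|j cs IH] v //=; rewrite (proj1 (p_edge v j)) IH.
Qed.

Lemma colours_cube_walk v cs :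
  pairmap (@Defs.col N G) (p v) (cube_walk v cs) = cs.
Proof.
by elim: cs v => [|j cs IH] v //=; rewrite (proj2 (p_edge v j)) IH.
Qed.

Lemma last_cube_walk v cs :
  last (p v) (cube_walk v cs) = p (v + \sum_(j <- cs) e_ j).
Proof.
elim: cs v => [|j cs IH] v /=; first by rewrite big_nil addr0.
by rewrite IH big_cons addrA.
Qed.

Lemma neighbour_cube v y : adj (p v) y -> y = p (v + e_ (Defs.col (p v) y)).
Proof.
move=> pv_y; set i := Defs.col (p v) y.
have [u [_ u_uniq]] := col_one (p v) i.
have [pv_adj pv_col] := p_edge v i.
by rewrite -(u_uniq y (conj pv_y erefl)) (u_uniq _ (conj pv_adj pv_col)).
Qed.

Lemma path_cube_walkE v s :
  path (@adj N G) (p v) s -> s = cube_walk v (pairmap (@Defs.col N G) (p v) s).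
Proof.
elim: s v => [|y s IH] v //= /andP[pv_y y_s].
have y_def := neighbour_cube pv_y.
by rewrite -y_def; congr (_ :: _); rewrite {2}y_def -IH // -y_def.
Qed.

Lemma last_path_cube v s :
  path (@adj N G) (p v) s -> last (p v) s = p (v + walk_vector (p v) s).
Proof.
by move=> v_s; rewrite walk_vectorE -last_cube_walk -(path_cube_walkE v_s).
Qed.

End CubeLabelling.

Theorem mainTheorem16 (N k : nat) (G : Adinkra N) (C : 'M['F_2]_N) :
  is_Nk_adinkra k G -> \rank C = k -> doubly_even C -> associated_code G C ->
  (forall (x : V G) (s : seq (V G)), closed_walk x s ->
     walk_vector x s != 0%R -> (walk_vector x s <= C)%MS) /\
  (forall c : 'rV['F_2]_N, (c <= C)%MS -> c != 0%R ->
     exists (x : V G) (s : seq (V G)), closed_walk x s /\ walk_vector x s = c).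
Proof.
move=> _ _ _ [p [p_onto p_fibre p_edge]]; split.
  move=> x s /andP[x_s /eqP s_closed] _; have [v pv_x] := p_onto x; subst x.
  rewrite (last_path_cube p_edge x_s) in s_closed.
  by have := proj1 (p_fibre _ _) s_closed; rewrite addrC addKr.
move=> c c_in_C _; have [cs cs_sum] := sum_e_surj c.
have walk_end : last (p 0) (cube_walk p 0 cs) = p c.
  by rewrite last_cube_walk cs_sum add0r.
exists (p 0), (cube_walk p 0 cs); split.
  rewrite /closed_walk (path_cube_walk p_edge) walk_end.
  by apply/eqP/p_fibre; rewrite subr0.
by rewrite walk_vectorE (colours_cube_walk p_edge) cs_sum.
Qed.
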